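(* Let $1\le p\le\infty$ and let $A,B\in\mathcal{B}_F$ with $L_a,L_b>0$. Then $$d_p\big(\psi(A),\psi(B)\big)\le\frac{4\,n_{\max}^{1-\frac1p}\,d_p(A,B)}{L_{\max}}=2r_p(A,B).$$
   Context: A persistence barcode is a finite multiset of intervals $[x,y]$, $x\le y$; $\mathcal{B}_F$ is the set of barcodes all of whose intervals have finite endpoints. For $A=\{[x_i^a,y_i^a]\}_{i=1}^{n_a}$, $\ell_i^a=y_i^a-x_i^a$, $L_a=\sum_i\ell_i^a$; similarly for $B$; $n_{\max}=\max\{n_a,n_b\}$, $L_{\max}=\max\{L_a,L_b\}$. The projection $\psi$ sends $A$ to $\psi(A)=\{[0,\ell_i^a/L_a]\}_{i=1}^{n_a}$. $p$-th Wasserstein distance: pad the smaller barcode with zero-length intervals $[t,t]$ until both have $n_{\max}$ intervals; $d_p(A,B)=\big(\min_\gamma\sum_i\max\{|x_i^a-x^b_{\gamma(i)}|^p,|y_i^a-y^b_{\gamma(i)}|^p\}\big)^{1/p}$ for $p<\infty$, $d_\infty(A,B)=\min_\gamma\max_i\max\{|x_i^a-x^b_{\gamma(i)}|,|y_i^a-y^b_{\gamma(i)}|\}$, minima over bijections $\gamma$ (and paddings). Relative error $r_p(A,B)=2n_{\max}^{1-1/p}d_p(A,B)/L_{\max}$, with $n_{\max}^{1-1/\infty}=n_{\max}$. *)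

From HB Require Import structures.
From mathcomp Require Import all_boot all_order all_algebra.
From mathcomp Require Import all_classical all_reals all_analysis.
Set Implicit Arguments. Unset Strict Implicit. Unset Printing Implicit Defensive.
Import Order.TTheory GRing.Theory Num.Theory.
Local Open Scope ring_scope.

Section Barcodes.
Variable R : realType.

(* A barcode with finite endpoints: a finite multiset of intervals [x,y],
   represented as a sequence of pairs (x,y) (order irrelevant). *)
Definition barcode := seq (R * R).
Definition is_barcode (A : barcode) : bool := all (fun iv => iv.1 <= iv.2) A.

Definition bar_len (A : barcode) : R := \sum_(iv <- A) (iv.2 - iv.1).
Definition nmax (A B : barcode) : nat := maxn (size A) (size B).
Definition Lmax (A B : barcode) : R := Num.max (bar_len A) (bar_len B).

Definition psi (A : barcode) : barcode :=
  [seq (0, (iv.2 - iv.1) / bar_len A) | iv <- A].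

Definition icost (iv jv : R * R) : R := Num.max `|iv.1 - jv.1| `|iv.2 - jv.2|.

Definition match_cost (p : \bar R) (A B : barcode) : R :=
  match p with
  | EFin r => (\sum_(IJ <- zip A B) Num.max (`|IJ.1.1 - IJ.2.1| `^ r)
                                            (`|IJ.1.2 - IJ.2.2| `^ r)) `^ r^-1
  | _ => \big[Num.max/0]_(IJ <- zip A B) icost IJ.1 IJ.2
  end.

Definition diag (ts : seq R) : barcode := [seq (t, t) | t <- ts].

(* p-Wasserstein distance: infimum over paddings of both barcodes by
   zero-length intervals [t,t] up to n_max intervals, and over bijections
   (a bijection = a reordering B'' of the padded B, matched by position). *)
Definition dW (p : \bar R) (A B : barcode) : R :=
  inf [set c : R | exists (ta tb : seq R) (B'' : barcode),
         [/\ size ta = (nmax A B - size A)%N,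
             size tb = (nmax A B - size B)%N,
             perm_eq B'' (B ++ diag tb) &
             c = match_cost p (A ++ diag ta) B'']].

Definition nexp (p : \bar R) (n : nat) : R :=
  match p with
  | EFin r => (n%:R) `^ (1 - r^-1)
  | _ => n%:R
  end.

Definition relerr (p : \bar R) (A B : barcode) : R :=
  2 * nexp p (nmax A B) * dW p A B / Lmax A B.

End Barcodes.

From HB Require Import structures.
From mathcomp Require Import all_boot all_order all_algebra.
From mathcomp Require Import all_classical all_reals all_analysis.
From mathcomp Require Import ring lra.
Import Order.TTheory GRing.Theory Num.Theory.
Local Open Scope ring_scope.
Set Implicit Arguments. Unset Strict Implicit. Unset Printing Implicit Defensive.

(* Let A' = A ++ padding and B' a reordering of B ++ padding, matched by position.
   Since psi sees only the lengths of the intervals and the total length, which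
   padding does not change, psi A', psi B' are admissible for psi A, psi B, with
   padding sent to [0,0].  For matched intervals of lengths a_i, b_i and cost c_i,
   |a_i - b_i| <= 2 c_i, so |L_a - L_b| <= 2 S with S = sum_j c_j; if L_b <= L_a,
     |a_i/L_a - b_i/L_b| <= (|a_i - b_i| + w_i |L_a - L_b|) / L_a
                          <= 2 (c_i + w_i S) / L_a,        w_i = b_i/L_b, sum_i w_i = 1.
   With the power-mean inequality S^p <= n^(p-1) sum_i c_i^p, the l^p norm of
   c + w S is at most 2 n^(1-1/p) |c|_p (for p = oo: 2 n |c|_oo).  Taking the
   infimum over matchings gives the bound. *)

Section PowerMean.
Variable R : realType.

Lemma powR_conv_le (r t x y : R) : 1 <= r -> 0 <= t <= 1 -> 0 <= x -> 0 <= y ->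
  (t * x + (1 - t) * y) `^ r <= t * x `^ r + (1 - t) * y `^ r.
Proof.
move=> r1 /andP[t0 t1] x0 y0.
have := @convex_powR R r r1 (Itv01 t0 t1) x y.
by rewrite !inE /= !in_itv /= !andbT !convRE => /(_ x0 y0).
Qed.

Lemma powR_mean_le (r : R) (xs : seq R) : 1 <= r -> all (>= 0) xs ->
  ((\sum_(x <- xs) x) / (size xs)%:R) `^ r <= (\sum_(x <- xs) x `^ r) / (size xs)%:R.
Proof.
move=> r1; have r0 : 0 < r := lt_le_trans ltr01 r1.
elim: xs => [|x xs IH] /=; first by rewrite !big_nil !mul0r powR0 ?gt_eqF.
case/andP=> x0 xs0; rewrite !big_cons.
have [->|xs_ne] := eqVneq xs [::]; first by rewrite !big_nil !addr0 !divr1.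
have S0 : 0 <= \sum_(y <- xs) y by rewrite big_seq sumr_ge0 // => y /(allP xs0).
rewrite -natr1; set n := (size xs)%:R; have n0 : 0 < n by rewrite ltr0n lt0n size_eq0.
pose t := (n + 1)^-1.
have n1 : 1 <= n + 1 by rewrite lerDr ltW.
have t01 : 0 <= t <= 1 by rewrite invr_ge0 invf_le1 ?(le_trans ler01 n1) ?(lt_le_trans ltr01 n1).
have splitE (z Z : R) : (z + Z) / (n + 1) = t * z + (1 - t) * (Z / n).
  by rewrite /t; field; rewrite -/n !gt_eqF ?addr_gt0.
rewrite !splitE; apply: le_trans (powR_conv_le r1 t01 x0 (divr_ge0 S0 (ltW n0))) _.
by rewrite lerD2l ler_wpM2l ?IH // subr_ge0; case/andP: t01.
Qed.

Lemma powR_sum_le (r : R) (xs : seq R) : 1 <= r -> all (>= 0) xs ->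
  (\sum_(x <- xs) x) `^ r <= (size xs)%:R `^ (r - 1) * \sum_(x <- xs) x `^ r.
Proof.
move=> r1 xs0; have r0 : 0 < r := lt_le_trans ltr01 r1.
have [->|xs_ne] := eqVneq xs [::]; first by rewrite !big_nil powR0 ?gt_eqF ?mulr0.
set n := (size xs)%:R; have n0 : 0 < n by rewrite ltr0n lt0n size_eq0.
have S0 : 0 <= \sum_(x <- xs) x by rewrite big_seq sumr_ge0 // => x /(allP xs0).
rewrite -[X in X `^ r](divfK (lt0r_neq0 n0)) powRM ?divr_ge0 ?(ltW n0) //.
apply: le_trans (ler_wpM2r (powR_ge0 n r) (powR_mean_le r1 xs0)) _.
by rewrite -(mulr_powRB1 (ltW n0) r0) mulrA divfK ?lt0r_neq0 // mulrC.
Qed.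

Lemma powR_max (a b r : R) : 0 <= a -> 0 <= b -> 0 <= r ->
  Num.max (a `^ r) (b `^ r) = Num.max a b `^ r.
Proof.
move=> a0 b0 r0; have [ab|/ltW ba] := leP a b.
  by rewrite max_r // ge0_ler_powR.
by rewrite max_l // ge0_ler_powR.
Qed.

End PowerMean.

Section SeqNorm.
Variable R : realType.
Implicit Types (p : \bar R) (r k : R).

Lemma ler_sum_mem (T : eqType) (s : seq T) (F : T -> R) (i : T) :
  (forall j, j \in s -> 0 <= F j) -> i \in s -> F i <= \sum_(j <- s) F j.
Proof.
move=> F0 si; rewrite (perm_big _ (perm_to_rem si)) big_cons lerDl big_seq.
by apply: sumr_ge0 => j /mem_rem /F0.
Qed.

(* Every non-finite [p], including the junk value [-oo], gives the maximum
   seeded with 0, as in [match_cost]. *)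
Definition seq_norm p (T : Type) (s : seq T) (F : T -> R) : R :=
  match p with
  | EFin r => (\sum_(i <- s) F i `^ r) `^ r^-1
  | _ => \big[Num.max/0]_(i <- s) F i
  end.

Lemma seq_norm_ge0 p (T : Type) (s : seq T) (F : T -> R) : 0 <= seq_norm p s F.
Proof. by case: p => [r||] /=; rewrite ?powR_ge0 ?bigmax_ge_id. Qed.

Lemma seq_norm_map p (T U : Type) (f : T -> U) (s : seq T) (F : U -> R) :
  seq_norm p (map f s) F = seq_norm p s (F \o f).
Proof. by case: p => [r||] /=; rewrite big_map. Qed.

Lemma eq_seq_norm p (T : Type) (s : seq T) (F G : T -> R) :
  F =1 G -> seq_norm p s F = seq_norm p s G.
Proof. by move/funext->. Qed.

Lemma le_seq_norm p (T : eqType) (s : seq T) (F G : T -> R) : (0 <= p)%E ->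
  (forall i, i \in s -> 0 <= F i <= G i) -> seq_norm p s F <= seq_norm p s G.
Proof.
case: p => [r||] //= r0 FG; last first.
  rewrite big_seq; apply: bigmax_le => [|i si]; first exact: bigmax_ge_id.
  case/andP: (FG i si) => _ /le_trans; apply.
  exact: le_bigmax_seq.
have sum_ge0 H : 0 <= \sum_(i <- s) H i `^ r by apply: sumr_ge0 => i _; apply: powR_ge0.
rewrite lee_fin in r0; apply: ge0_ler_powR; rewrite ?invr_ge0 ?nnegrE ?sum_ge0 //.
rewrite big_seq [leRHS]big_seq; apply: ler_sum => i /FG /andP[F0 FG'].
by apply: ge0_ler_powR; rewrite ?nnegrE // (le_trans F0).
Qed.

Lemma seq_normZ p (T : eqType) (s : seq T) k (F : T -> R) : (0 < p)%E -> 0 <= k ->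
  (forall i, i \in s -> 0 <= F i) -> seq_norm p s (fun i => k * F i) = k * seq_norm p s F.
Proof.
case: p => [r||] //= r0 k0 F0; rewrite ?lte_fin in r0; last first.
  by rewrite (big_endo _ (fun x y => maxr_pMr x y k0) (mulr0 k)).
rewrite big_seq (eq_bigr (fun i => k `^ r * F i `^ r)) => [|i /F0]; last exact: powRM.
rewrite -big_seq -mulr_sumr powRM ?powR_ge0 ?sumr_ge0 // => [|i _]; last exact: powR_ge0.
by rewrite -powRrM mulfV ?gt_eqF // powRr1.
Qed.

Lemma bigmax_add_sum_le (T : eqType) (s : seq T) (c w : T -> R) :
  (forall i, i \in s -> 0 <= c i /\ 0 <= w i) -> \sum_(i <- s) w i <= 1 ->
  \big[Num.max/0]_(i <- s) (c i + w i * \sum_(j <- s) c j)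
    <= 2 * (size s)%:R * \big[Num.max/0]_(i <- s) c i.
Proof.
move=> cw0 sw1; set M := \big[Num.max/0]_(i <- s) c i.
have cM i : i \in s -> c i <= M by move=> si; apply: le_bigmax_seq.
have M0 : 0 <= M := bigmax_ge_id _ _ _ _.
have [->|s_ne] := eqVneq s [::]; first by rewrite big_nil mulr0 mul0r.
have N1 : 1 <= (size s)%:R :> R by rewrite ler1n lt0n size_eq0.
have SM : \sum_(j <- s) c j <= (size s)%:R * M.
  rewrite -sum1_size natr_sum mulr_suml big_seq [leRHS]big_seq.
  by apply: ler_sum => i si; rewrite mul1r cM.
rewrite big_seq; apply: bigmax_le => [|i si]; first by rewrite !mulr_ge0 ?(le_trans ler01 N1).
have w1 : w i <= 1 by apply: le_trans sw1; apply: ler_sum_mem => // j /cw0 [].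
have wS : w i * \sum_(j <- s) c j <= (size s)%:R * M.
  apply: le_trans SM; rewrite -[leRHS]mul1r ler_wpM2r // big_seq.
  by apply: sumr_ge0 => j /cw0 [].
have NM : M <= (size s)%:R * M by rewrite ler_peMl.
have := cM i si; lra.
Qed.

Lemma sum_powR_add_sum_le r (T : eqType) (s : seq T) (c w : T -> R) : 1 <= r ->
  (forall i, i \in s -> 0 <= c i /\ 0 <= w i) -> \sum_(i <- s) w i <= 1 ->
  \sum_(i <- s) (c i + w i * \sum_(j <- s) c j) `^ r
    <= 2 `^ r * (size s)%:R `^ (r - 1) * \sum_(i <- s) c i `^ r.
Proof.
move=> r1 cw0 sw1; have r0 : 0 < r := lt_le_trans ltr01 r1.
have [->|s_ne] := eqVneq s [::]; first by rewrite !big_nil mulr0.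
set S := \sum_(j <- s) c j; set C := \sum_(i <- s) c i `^ r.
set N := (size s)%:R `^ (r - 1); set W := \sum_(i <- s) w i.
have S0 : 0 <= S by rewrite /S big_seq sumr_ge0 // => i /cw0 [].
have C0 : 0 <= C by rewrite sumr_ge0 // => i _; apply: powR_ge0.
have N1 : 1 <= N.
  by rewrite -(powRr0 (size s)%:R) ler_powR ?ler1n ?lt0n ?size_eq0 // subr_ge0.
have SC : S `^ r <= N * C.
  have := powR_sum_le r1 (_ : all (>= 0) (map c s)); rewrite !big_map size_map; apply.
  by apply/allP => _ /mapP [i /cw0 [c0 _] ->].
have pt i : i \in s -> (c i + w i * S) `^ r <= 2 `^ (r - 1) * (c i `^ r + w i * S `^ r).
  move=> si; have [c0 w0] := cw0 i si.
  have w1 : w i <= 1 by apply: le_trans sw1; apply: ler_sum_mem => // j /cw0 [].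
  have := powR_sum_le r1 (_ : all (>= 0) [:: c i; w i * S]).
  rewrite /= !big_cons !big_nil !addr0 c0 mulr_ge0 // => /(_ isT) /le_trans; apply.
  rewrite ler_wpM2l ?powR_ge0 // lerD2l powRM // ler_wpM2r ?powR_ge0 //.
  have [->|w_ne] := eqVneq (w i) 0; first by rewrite powR0 ?gt_eqF.
  by rewrite ge1r_powR // lt0r w_ne w0 w1.
rewrite big_seq; apply: le_trans (ler_sum _ pt) _.
rewrite -big_seq -mulr_sumr big_split /= -mulr_suml -/C -/W.
rewrite -(mulr_powRB1 (ler0n _ 2) r0) -/N.
have WS : W * S `^ r <= S `^ r by rewrite ler_piMl ?powR_ge0.
have CN : C <= N * C by rewrite ler_peMl.
have -> : 2 * 2 `^ (r - 1) * N * C = 2 `^ (r - 1) * (2 * (N * C)) by ring.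
by rewrite ler_wpM2l ?powR_ge0 //; lra.
Qed.

Lemma seq_norm_add_sum_le p (T : eqType) (s : seq T) (c w : T -> R) : (1 <= p)%E ->
  (forall i, i \in s -> 0 <= c i /\ 0 <= w i) -> \sum_(i <- s) w i <= 1 ->
  seq_norm p s (fun i => c i + w i * \sum_(j <- s) c j)
    <= 2 * nexp p (size s) * seq_norm p s c.
Proof.
case: p => [r||] //= r1 cw0 sw1; last exact: bigmax_add_sum_le.
rewrite lee_fin in r1; have r0 : 0 < r := lt_le_trans ltr01 r1.
have sum_ge0 H : 0 <= \sum_(i <- s) H i `^ r by apply: sumr_ge0 => i _; apply: powR_ge0.
have ri0 : 0 <= r^-1 by rewrite invr_ge0 ltW.
apply: le_trans (ge0_ler_powR ri0 _ _ (sum_powR_add_sum_le r1 cw0 sw1)) _;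
  rewrite ?nnegrE ?mulr_ge0 ?powR_ge0 ?sum_ge0 //.
rewrite !powRM ?mulr_ge0 ?powR_ge0 ?sum_ge0 // -!powRrM mulfV ?gt_eqF // powRr1 //.
by have -> : (r - 1) * r^-1 = 1 - r^-1 by field; rewrite gt_eqF.
Qed.


Lemma normalized_dist_le (a b La Lb : R) : 0 <= b -> 0 < Lb -> Lb <= La ->
  `|a / La - b / Lb| <= (`|a - b| + b / Lb * `|La - Lb|) / La.
Proof.
move=> b0 Lb0 LbLa; have La0 := lt_le_trans Lb0 LbLa.
have -> : a / La - b / Lb = ((a - b) + b / Lb * (Lb - La)) / La.
  by field; rewrite !gt_eqF.
rewrite normrM [`|La^-1|]ger0_norm ?invr_ge0 ?(ltW La0) // ler_pM2r ?invr_gt0 //.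
rewrite (le_trans (ler_normD _ _)) // normrM [`|b / Lb|]ger0_norm ?divr_ge0 ?(ltW Lb0) //.
by rewrite [`|Lb - La|]distrC.
Qed.

Lemma seq_norm_normalized_le p (T : eqType) (s : seq T) (a b c : T -> R) :
  (1 <= p)%E ->
  (forall i, i \in s -> [/\ 0 <= a i, 0 <= b i & `|a i - b i| <= 2 * c i]) ->
  0 < \sum_(i <- s) a i -> 0 < \sum_(i <- s) b i ->
  seq_norm p s (fun i => `|a i / \sum_(j <- s) a j - b i / \sum_(j <- s) b j|)
    <= 4 * nexp p (size s) * seq_norm p s c
       / Num.max (\sum_(i <- s) a i) (\sum_(i <- s) b i).
Proof.
move=> p1; wlog LbLa : a b / \sum_(i <- s) b i <= \sum_(i <- s) a i.
  move=> hwlog abc La0 Lb0.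
  have /orP[LbLa|LaLb] := le_total (\sum_(i <- s) b i) (\sum_(i <- s) a i).
    exact: hwlog.
  rewrite maxC; under eq_seq_norm => i do rewrite distrC.
  by apply: hwlog => // i /abc[a0 b0 abc_i]; rewrite distrC.
move=> abc La0 Lb0; rewrite max_l //.
set La := \sum_(i <- s) a i; set Lb := \sum_(i <- s) b i; set S := \sum_(i <- s) c i.
have c0 i : i \in s -> 0 <= c i.
  by case/abc=> _ _ /(le_trans (normr_ge0 _)); rewrite pmulr_rge0.
have dL : `|La - Lb| <= 2 * S.
  rewrite -sumrB (le_trans (ler_norm_sum _ _ _)) // mulr_sumr big_seq [leRHS]big_seq.
  by apply: ler_sum => i /abc[].
have cw0 i : i \in s -> 0 <= c i /\ 0 <= b i / Lb.
  by move=> si; split; [exact: c0 si|case/abc: si => _ b0 _; rewrite divr_ge0 ?(ltW Lb0)].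
have sw1 : \sum_(i <- s) b i / Lb <= 1 by rewrite -mulr_suml mulfV ?gt_eqF.
have S0 : 0 <= S by rewrite /S big_seq sumr_ge0.
have pt i : i \in s -> 0 <= `|a i / La - b i / Lb| <= 2 / La * (c i + b i / Lb * S).
  move=> /[dup] /cw0[_ w0] /abc[_ b0 abc_i]; rewrite normr_ge0 /=.
  apply: le_trans (normalized_dist_le _ b0 Lb0 LbLa) _.
  have -> : 2 / La * (c i + b i / Lb * S) = (2 * c i + b i / Lb * (2 * S)) / La by ring.
  by rewrite ler_pM2r ?invr_gt0 // lerD // ler_wpM2l.
apply: le_trans (le_seq_norm (le_trans lee01 p1) pt) _.
rewrite seq_normZ ?(lt_le_trans lte01 p1) ?divr_ge0 ?(ltW La0) //; last first.
  by move=> i /cw0[c0i w0]; apply: addr_ge0 => //; apply: mulr_ge0.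
apply: le_trans (ler_wpM2l _ (seq_norm_add_sum_le p1 cw0 sw1)) _.
  by rewrite divr_ge0 ?(ltW La0).
by rewrite le_eqVlt; apply/orP; left; apply/eqP; ring.
Qed.

End SeqNorm.

Section Barcodes.
Variable R : realType.
Implicit Types (p : \bar R) (A B : barcode R) (ts : seq R).

Lemma nexp_gt0 p n : (0 < n)%N -> 0 < nexp p n.
Proof.
by rewrite -(ltr0n R) => n0; case: p => [r||] //=; apply: powR_gt0.
Qed.

Lemma match_costE p A B : (0 <= p)%E ->
  match_cost p A B = seq_norm p (zip A B) (fun IJ => icost IJ.1 IJ.2).
Proof.
case: p => [r||] //=; rewrite lee_fin => r0.
by congr (_ `^ _); apply: eq_bigr => IJ _; rewrite powR_max.
Qed.

Lemma match_cost_ge0 p A B : 0 <= match_cost p A B.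
Proof. by case: p => [r||] /=; rewrite ?powR_ge0 ?bigmax_ge_id. Qed.

Lemma icost_pair0 (x y : R) : icost (0, x) (0, y) = `|x - y|.
Proof. by rewrite /icost /= subrr normr0 max_r. Qed.

Lemma len_diff_le_icost (x y : R * R) :
  `|(x.2 - x.1) - (y.2 - y.1)| <= 2 * icost x y.
Proof.
have -> : (x.2 - x.1) - (y.2 - y.1) = (x.2 - y.2) - (x.1 - y.1) by ring.
apply: le_trans (ler_normB _ _) _.
have h1 : `|x.1 - y.1| <= icost x y by rewrite le_max lexx.
have h2 : `|x.2 - y.2| <= icost x y by rewrite le_max lexx orbT.
lra.
Qed.

Lemma bar_len_cat_diag A ts : bar_len (A ++ diag ts) = bar_len A.
Proof.
by rewrite /bar_len big_cat /= big_map [X in _ + X]big1 ?addr0 // => t _; apply: subrr.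
Qed.

Lemma perm_bar_len A B : perm_eq A B -> bar_len A = bar_len B.
Proof. exact: perm_big. Qed.

Lemma is_barcode_cat_diag A ts : is_barcode (A ++ diag ts) = is_barcode A.
Proof.
rewrite /is_barcode all_cat [all _ (diag ts)](_ : _ = true) ?andbT //.
by apply/allP => _ /mapP[t _ ->] /=.
Qed.

Lemma psi_cat_diag A ts : psi (A ++ diag ts) = psi A ++ diag (nseq (size ts) 0).
Proof.
rewrite /psi bar_len_cat_diag map_cat; congr (_ ++ _).
by elim: ts => //= t ts ->; rewrite subrr mul0r.
Qed.

Lemma perm_is_barcode A B : perm_eq A B -> is_barcode A = is_barcode B.
Proof. exact: perm_all. Qed.

Lemma perm_psi A B : perm_eq A B -> perm_eq (psi A) (psi B).
Proof. by move=> AB; rewrite /psi (perm_bar_len AB) perm_map. Qed.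

Lemma match_cost_psi_le p A B : (1 <= p)%E -> size A = size B ->
  is_barcode A -> is_barcode B -> 0 < bar_len A -> 0 < bar_len B ->
  match_cost p (psi A) (psi B) <= 4 * nexp p (size A) * match_cost p A B / Lmax A B.
Proof.
move=> p1 AB bA bB LA0 LB0; have p0 : (0 <= p)%E := le_trans lee01 p1.
set s := zip A B.
have eA : unzip1 s = A by rewrite unzip1_zip ?AB.
have eB : unzip2 s = B by rewrite unzip2_zip ?AB.
have -> : size A = size s by rewrite size1_zip ?AB.
rewrite /psi -{2}eA -{2}eB /unzip1 /unzip2 -!map_comp !match_costE // zip_map seq_norm_map.
under eq_seq_norm => IJ do rewrite /= icost_pair0.
have eLA : bar_len A = \sum_(IJ <- s) (IJ.1.2 - IJ.1.1) by rewrite /bar_len -eA big_map.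
have eLB : bar_len B = \sum_(IJ <- s) (IJ.2.2 - IJ.2.1) by rewrite /bar_len -eB big_map.
rewrite -/s /Lmax eLA eLB; apply: seq_norm_normalized_le; rewrite -?eLA -?eLB //.
move: bA bB; rewrite -eA -eB /is_barcode !all_map => /allP bA /allP bB IJ sIJ.
by split; rewrite ?len_diff_le_icost // subr_ge0; [exact: bA | exact: bB].
Qed.

Lemma dW_le_match_cost p A B ta tb B' :
  size ta = (nmax A B - size A)%N -> size tb = (nmax A B - size B)%N ->
  perm_eq B' (B ++ diag tb) -> dW p A B <= match_cost p (A ++ diag ta) B'.
Proof.
move=> sta stb BB'; apply: ge_inf; last by exists ta, tb, B'.
by exists 0 => _ [? [? [? [_ _ _ ->]]]]; apply: match_cost_ge0.
Qed.

End Barcodes.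

Theorem lemma4 (R : realType) (p : \bar R) (A B : barcode R) :
  (1 <= p)%E -> is_barcode A -> is_barcode B ->
  0 < bar_len A -> 0 < bar_len B ->
  dW p (psi A) (psi B)
    <= 4 * nexp p (nmax A B) * dW p A B / Lmax A B
  /\ 4 * nexp p (nmax A B) * dW p A B / Lmax A B = 2 * relerr p A B.
Proof.
move=> p1 bA bB LA0 LB0; split; last by rewrite /relerr; ring.
set N := nmax A B; have sA : (size A <= N)%N := leq_maxl _ _.
have sB : (size B <= N)%N := leq_maxr _ _.
have A_ne : (0 < size A)%N by case: (A) LA0 => //; rewrite /bar_len big_nil ltxx.
have K0 : 0 < 4 * nexp p N / Lmax A B.
  by rewrite !mulr_gt0 ?invr_gt0 ?lt_max ?LA0 ?nexp_gt0 // (leq_trans A_ne sA).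
rewrite mulrAC -ler_pdivrMl //; apply: lb_le_inf.
  pose tA := nseq (N - size A) (0 : R); pose tB := nseq (N - size B) (0 : R).
  exists (match_cost p (A ++ diag tA) (B ++ diag tB)), tA, tB, (B ++ diag tB).
  by rewrite !size_nseq.
move=> _ [ta [tb [B' [sta stb BB' ->]]]]; rewrite ler_pdivrMl //.
have sA' : size (A ++ diag ta) = N by rewrite size_cat size_map sta subnKC.
have sB' : size B' = N by rewrite (perm_size BB') size_cat size_map stb subnKC.
have LB' : bar_len B' = bar_len B by rewrite (perm_bar_len BB') bar_len_cat_diag.
have := @dW_le_match_cost _ p (psi A) (psi B) (nseq (size ta) 0) (nseq (size tb) 0) (psi B').
rewrite -!psi_cat_diag perm_psi // /nmax !size_map !size_nseq => /(_ sta stb isT).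
move/le_trans; apply; apply: le_trans (match_cost_psi_le p1 _ _ _ _ _) _.
- by rewrite sA' sB'.
- by rewrite is_barcode_cat_diag.
- by rewrite (perm_is_barcode BB') is_barcode_cat_diag.
- by rewrite bar_len_cat_diag.
- by rewrite LB'.
by rewrite sA' /Lmax bar_len_cat_diag LB' mulrAC.
Qed.
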